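(* Let $\tilde{\mathfrak{g}}$ be a real solvable Lie algebra with an Einstein metric $\langle,\rangle$, $\widetilde{\operatorname{Ric}}=\lambda\,\mathrm{id}$ with $\lambda\neq0$, admitting a pseudo-Iwasawa decomposition $\tilde{\mathfrak g}=\mathfrak{g}\oplus^\perp\mathfrak{a}$. Then $\mathfrak{g}$ is the nilradical of $\tilde{\mathfrak{g}}$.
   Context: A metric on a Lie algebra is a nondegenerate symmetric bilinear form, possibly indefinite; the Ricci operator is that of the corresponding left-invariant pseudo-Riemannian metric on the simply connected Lie group. A pseudo-Iwasawa decomposition of a metric Lie algebra $\tilde{\mathfrak g}$ is an orthogonal direct sum of vector spaces $\tilde{\mathfrak{g}}=\mathfrak{g}\oplus^\perp\mathfrak{a}$ with $\mathfrak{g}$ a nilpotent ideal, $\mathfrak{a}$ an abelian subalgebra, and $\operatorname{ad}X$ self-adjoint with respect to the metric for every $X\in\mathfrak a$. *)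

(* finite-dimensional real Lie algebras on 'rV[R]_n,
   R : realType (the real numbers), subspaces as row spaces (mxalgebra). *)
From HB Require Import structures.
From mathcomp Require Import all_boot all_order all_algebra.
From mathcomp Require Import reals.
Set Implicit Arguments. Unset Strict Implicit. Unset Printing Implicit Defensive.
Import Order.TTheory GRing.Theory Num.Theory.
Local Open Scope ring_scope.

Section LieDefs.
Variables (R : realType) (n : nat).
Notation V := 'rV[R]_n.
Implicit Types (br : V -> V -> V) (G U : 'M[R]_n).

Definition lie_bracket br : Prop :=
  [/\ (forall (a : R) x y z, br (a *: x + y) z = a *: br x z + br y z),
      (forall (a : R) x y z, br z (a *: x + y) = a *: br z x + br z y),
      (forall x, br x x = 0) &
      (forall x y z, br x (br y z) + br y (br z x) + br z (br x y) = 0)].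

(* a metric: nondegenerate symmetric bilinear form, given by its Gram matrix
   G in the standard basis: <x, y> = x G y^T *)
Definition metric_mx G : Prop := G^T = G /\ G \in unitmx.

Definition inner G (x y : V) : R := (x *m G *m y^T) 0 0.

Definition ebase (i : 'I_n) : V := delta_mx 0 i.

(* Levi-Civita connection of the left-invariant metric (Koszul formula):
   2 <nabla_X Y, Z> = <[X,Y],Z> - <[Y,Z],X> + <[Z,X],Y> *)
Definition levi_civita br G (X Y : V) : V :=
  (2%:R^-1 : R) *:
    ((\row_k (inner G (br X Y) (ebase k) - inner G (br Y (ebase k)) X
              + inner G (br (ebase k) X) Y)) *m invmx G).

Definition curv br G (X Y Z : V) : V :=
  levi_civita br G X (levi_civita br G Y Z)
  - levi_civita br G Y (levi_civita br G X Z)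
  - levi_civita br G (br X Y) Z.

Definition ricci_form br G (Y Z : V) : R :=
  \sum_(i < n) (curv br G (ebase i) Y Z) 0 i.

(* Ricci operator: <Ric Y, Z> = ric(Y, Z) *)
Definition ricci_op br G (Y : V) : V :=
  (\row_k ricci_form br G Y (ebase k)) *m invmx G.

Definition is_subalgebra br U : Prop :=
  forall x y : V, (x <= U)%MS -> (y <= U)%MS -> (br x y <= U)%MS.

Definition is_ideal br U : Prop :=
  forall x y : V, (x <= U)%MS -> (br x y <= U)%MS.

Definition is_abelian br U : Prop :=
  forall x y : V, (x <= U)%MS -> (y <= U)%MS -> br x y = 0.

Definition is_nilpotent br U : Prop :=
  exists k : nat, forall (s : seq V) (y : V),
    size s = k -> all (fun x => (x <= U)%MS) s -> (y <= U)%MS ->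
    foldr br y s = 0.

Definition derived br U : 'M[R]_n :=
  (\sum_(i < n) \sum_(j < n) <<br (row i U) (row j U)>>)%MS.

Definition is_solvable br U : Prop :=
  exists k : nat, iter k (derived br) U = 0.

Definition is_nilradical br N : Prop :=
  [/\ is_ideal br N, is_nilpotent br N &
      forall I, is_ideal br I -> is_nilpotent br I -> (I <= N)%MS].

Definition pseudo_iwasawa br G (g a : 'M[R]_n) : Prop :=
  [/\ (g + a == 1%:M)%MS /\ (g :&: a)%MS == 0,
      (forall x y : V, (x <= g)%MS -> (y <= a)%MS -> inner G x y = 0),
      is_ideal br g /\ is_nilpotent br g,
      is_subalgebra br a /\ is_abelian br a &
      (forall X : V, (X <= a)%MS ->
         forall Y Z : V, inner G (br X Y) Z = inner G Y (br X Z))].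

End LieDefs.

(* Let I be a nilpotent ideal and split x in I as x_g + x_a along g (+) a.
   For X, Z in a the Koszul formula gives nabla_X = 0 and nabla_Y Z = [Y, Z],
   so R(W, X) Z = -[[W, X], Z] and ric(X, Z) = -B(Z, X), B the Killing form.
   For a nilpotent ideal J and y in J, ad z o ad y is nilpotent, so
   B(z, y) = 0; applied to I and to g this gives
   lambda <x_a, Z> = ric(x_a, Z) = -B(Z, x) + B(Z, x_g) = 0 for every Z in a.
   As x_a is also orthogonal to g, nondegeneracy forces x_a = 0: I <= g. *)

From HB Require Import structures.
From mathcomp Require Import all_boot all_order all_algebra.
From mathcomp Require Import reals.
From mathcomp Require Import ring.
Set Implicit Arguments.
Unset Strict Implicit.
Unset Printing Implicit Defensive.

Import Order.TTheory GRing.Theory Num.Theory.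
Local Open Scope ring_scope.

Lemma char_poly_nilpotent (F : fieldType) m (A : 'M[F]_m) k :
  A ^+ k = 0 -> char_poly A = 'X^m.
Proof.
(* ('X - A) * S = 'X^k for a geometric sum S, so char_poly A | 'X^(k*m). *)
move=> Ak; pose B := map_mx polyC A.
pose S := \sum_(i < k) 'X%:M ^+ (k.-1 - i) * B ^+ i.
have charS : char_poly_mx A * S = ('X ^+ k)%:M.
  rewrite /char_poly_mx -/B -subrXX_comm; last exact: esym (comm_mx_scalar _ _).
  by rewrite -[B ^+ k]rmorphXn Ak rmorph0 subr0 rmorphXn.
have : char_poly A %| ('X - 0%:P) ^+ (k * m).
  rewrite subr0 exprM -(det_scalar m) -charS det_mulmx; exact: dvdp_mulr.
case/dvdp_exp_XsubCP => j _.
rewrite subr0 eqp_monic ?char_poly_monic ?monicXn //.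
move=> /eqP charE; have := size_char_poly A.
by rewrite charE size_polyXn => -[->].
Qed.

Lemma mxtrace_nilpotent (F : fieldType) m (A : 'M[F]_m) k :
  A ^+ k = 0 -> \tr A = 0.
Proof.
case: m A => [|m] A /char_poly_nilpotent charA.
  by rewrite /mxtrace big_ord0.
by apply/eqP; rewrite -oppr_eq0 -char_poly_trace // charA coefXn ltn_eqF.
Qed.

Lemma mxtrace_lin1_nilpotent (F : fieldType) m (f : 'rV[F]_m -> 'rV[F]_m) k :
  linear f -> (forall v, iter k f v = 0) -> \tr (lin1_mx f) = 0.
Proof.
move=> lin_f fk.
pose fL : {linear _ -> _} := HB.pack f (GRing.isLinear.Build _ _ _ _ f lin_f).
have mul_pow j u : u *m lin1_mx f ^+ j = iter j f u.
  elim: j u => [|j IHj] u; first by rewrite expr0 mulmx1.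
  by rewrite exprS -mulmxE mulmxA (mul_rV_lin1 fL) IHj iterSr.
apply: (@mxtrace_nilpotent _ _ _ k); apply/row_matrixP => i.
by rewrite row0 rowE mul_pow fk.
Qed.

Section LieBracket.
Variables (R : realType) (n : nat) (br : 'rV[R]_n -> 'rV[R]_n -> 'rV[R]_n).
Hypothesis Hbr : lie_bracket br.
Local Notation V := 'rV[R]_n.

Lemma br_linear_l z : linear (br^~ z).
Proof. by case: Hbr => h _ _ _ a x y; apply: h. Qed.

Lemma br_linear z : linear (br z).
Proof. by case: Hbr => _ h _ _ a x y; apply: h. Qed.

Lemma brDl x y z : br (x + y) z = br x z + br y z.
Proof. by have := br_linear_l z 1 x y; rewrite !scale1r. Qed.

Lemma brDr z x y : br z (x + y) = br z x + br z y.
Proof. by have := br_linear z 1 x y; rewrite !scale1r. Qed.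

Lemma br0l z : br 0 z = 0.
Proof. by apply: (addrI (br 0 z)); rewrite addr0 -brDl addr0. Qed.

Lemma br0r z : br z 0 = 0.
Proof. by apply: (addrI (br z 0)); rewrite addr0 -brDr addr0. Qed.

Lemma brNl x z : br (- x) z = - br x z.
Proof. by apply/eqP; rewrite -addr_eq0 -brDl addNr br0l. Qed.

Lemma brNr z x : br z (- x) = - br z x.
Proof. by apply/eqP; rewrite -addr_eq0 -brDr addNr br0r. Qed.

Lemma brBl x y z : br (x - y) z = br x z - br y z.
Proof. by rewrite brDl brNl. Qed.

Lemma brBr z x y : br z (x - y) = br z x - br z y.
Proof. by rewrite brDr brNr. Qed.

Lemma br_anti x y : br x y = - br y x.
Proof.
case: Hbr => _ _ brxx _; apply/eqP; rewrite -addr_eq0.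
by have := brxx (x + y); rewrite brDl !brDr !brxx add0r addr0 => ->.
Qed.

Lemma br_leibniz x y v : br x (br y v) = br (br x y) v + br y (br x v).
Proof.
case: Hbr => _ _ _ /(_ x y v); rewrite (br_anti v x) (br_anti v (br x y)) brNr.
by move/eqP; rewrite -addrA addr_eq0 opprD !opprK addrC => /eqP.
Qed.

Definition killing_form (x y : V) : R := \tr (lin1_mx (br x \o br y)).

Lemma killing_formE x y :
  killing_form x y = \sum_(i < n) br x (br y (ebase R i)) 0 i.
Proof.
by rewrite /killing_form /mxtrace; apply: eq_bigr => i _; rewrite mxE.
Qed.

Lemma killing_formBr (z x y : V) :
  killing_form z (x - y) = killing_form z x - killing_form z y.
Proof.
rewrite !killing_formE -sumrB.
by apply: eq_bigr => i _; rewrite brBl brBr !mxE.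
Qed.

Fixpoint ad_annihilated (J : 'M[R]_n) m (v : V) : Prop :=
  if m is m'.+1 then forall x, (x <= J)%MS -> ad_annihilated J m' (br x v)
  else v = 0.

Lemma ad_annihilatedD J m u v :
  ad_annihilated J m u -> ad_annihilated J m v -> ad_annihilated J m (u + v).
Proof.
elim: m u v => [|m IHm] u v /=; first by move=> -> ->; rewrite addr0.
by move=> hu hv x hx; rewrite brDr; apply: IHm; [apply: hu | apply: hv].
Qed.

Lemma ad_annihilated_br J m y v : is_ideal br J ->
  ad_annihilated J m v -> ad_annihilated J m (br y v).
Proof.
move=> idJ; elim: m v => [|m IHm] v /=; first by move=> ->; rewrite br0r.
move=> hv x hx; rewrite br_leibniz; apply: ad_annihilatedD.
  exact: hv _ (idJ _ _ hx).
exact: IHm (hv x hx).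
Qed.

Lemma nilpotent_ad_annihilated J : is_nilpotent br J ->
  exists k, forall y, (y <= J)%MS -> ad_annihilated J k y.
Proof.
case=> k nilJ; exists k => y hy.
have foldr_ann m v : (forall s, size s = m -> all (fun x => (x <= J)%MS) s ->
    foldr br v s = 0) -> ad_annihilated J m v.
  elim: m v => [|m IHm] v hv /=; first exact: hv [::] erefl isT.
  move=> x hx; apply: IHm => s hs hall; rewrite -foldr_rcons; apply: hv.
    by rewrite size_rcons hs.
  by rewrite all_rcons hx.
by apply: foldr_ann => s hs hall; apply: nilJ.
Qed.

Lemma killing_form_nil_ideal J z y : is_ideal br J -> is_nilpotent br J ->
  (y <= J)%MS -> killing_form z y = 0.
Proof.
move=> idJ /nilpotent_ad_annihilated[k nilJ] hy.
(* Each application of ad z o ad y uses up one level, since y lies in J. *)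
pose T := br z \o br y.
have T_ann m v : ad_annihilated J m v -> ad_annihilated J m.-1 (T v).
  case: m => [|m] /= hv; first by rewrite hv /T /= !br0r.
  exact: ad_annihilated_br (hv y hy).
have T_iter j v : ad_annihilated J (k - j) (iter j.+1 T v).
  elim: j => [|j IHj]; first by rewrite subn0; apply/ad_annihilated_br/nilJ/idJ.
  by rewrite iterS subnS; apply: T_ann.
apply: (@mxtrace_lin1_nilpotent _ _ _ k.+1).
  by move=> c u v; rewrite /T /= !br_linear.
by move=> v; have := T_iter k v; rewrite subnn.
Qed.

End LieBracket.

Section Metric.
Variables (R : realType) (n : nat) (G : 'M[R]_n).
Hypothesis HG : metric_mx G.
Local Notation V := 'rV[R]_n.

Lemma inner_scalar_l z : scalar (inner G ^~ z).
Proof. by move=> a x y; rewrite /inner !mulmxDl -!scalemxAl !mxE. Qed.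

Lemma inner_scalar z : scalar (inner G z).
Proof.
by move=> a x y; rewrite /inner linearD linearZ /= mulmxDr -scalemxAr !mxE.
Qed.

Lemma innerDl x y z : inner G (x + y) z = inner G x z + inner G y z.
Proof. by have := inner_scalar_l z 1 x y; rewrite scale1r mul1r. Qed.

Lemma innerDr z x y : inner G z (x + y) = inner G z x + inner G z y.
Proof. by have := inner_scalar z 1 x y; rewrite scale1r mul1r. Qed.

Lemma innerZl a x z : inner G (a *: x) z = a * inner G x z.
Proof. by rewrite /inner -!scalemxAl !mxE. Qed.

Lemma innerNl x z : inner G (- x) z = - inner G x z.
Proof. by rewrite -scaleN1r innerZl mulN1r. Qed.

Lemma innerBl x y z : inner G (x - y) z = inner G x z - inner G y z.
Proof. by rewrite innerDl innerNl. Qed.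

Lemma inner_sym x y : inner G x y = inner G y x.
Proof.
rewrite /inner; have -> : x *m G *m y^T = (y *m G *m x^T)^T.
  by rewrite !trmx_mul trmxK (proj1 HG) mulmxA.
by rewrite mxE.
Qed.

Lemma inner_ebase u k : inner G u (ebase R k) = (u *m G) 0 k.
Proof. by rewrite /inner /ebase trmx_delta -colE mxE. Qed.

Lemma inner_nondeg u : (forall w, inner G u w = 0) -> u = 0.
Proof.
move=> u_perp; have uG : u *m G = 0.
  by apply/rowP => k; rewrite -inner_ebase u_perp mxE.
by rewrite -(mulmxK (proj2 HG) u) uG mul0mx.
Qed.

Lemma eq_inner u v : (forall w, inner G u w = inner G v w) -> u = v.
Proof.
move=> uv; apply/eqP; rewrite -subr_eq0; apply/eqP/inner_nondeg => w.
by rewrite innerBl uv subrr.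
Qed.

Lemma inner_row_invmx (phi : V -> R) : scalar phi ->
  forall w, inner G ((\row_k phi (ebase R k)) *m invmx G) w = phi w.
Proof.
move=> lin_phi w.
pose phiL : {scalar V} :=
  HB.pack phi (GRing.isLinear.Build _ _ _ _ phi lin_phi).
rewrite /inner (mulmxKV (proj2 HG)) mxE.
rewrite -[phi w]/(phiL w) {2}(row_sum_delta w) linear_sum.
by apply: eq_bigr => k _; rewrite linearZ !mxE mulrC.
Qed.

End Metric.

Section LeviCivita.
Variables (R : realType) (n : nat) (br : 'rV[R]_n -> 'rV[R]_n -> 'rV[R]_n)
  (G : 'M[R]_n).
Hypotheses (Hbr : lie_bracket br) (HG : metric_mx G).
Local Notation nabla := (levi_civita br G).

Lemma inner_levi_civita X Y W : inner G (nabla X Y) W =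
  2^-1 * (inner G (br X Y) W - inner G (br Y W) X + inner G (br W X) Y).
Proof.
rewrite /levi_civita innerZl (inner_row_invmx HG (phi := fun W =>
  inner G (br X Y) W - inner G (br Y W) X + inner G (br W X) Y)) // => c u v.
rewrite inner_scalar (br_linear Hbr) !inner_scalar_l (br_linear_l Hbr).
by rewrite inner_scalar_l; ring.
Qed.

Lemma levi_civita_linear X : linear (nabla X).
Proof.
move=> c Y Y'; apply: (eq_inner HG) => W.
rewrite inner_scalar_l !inner_levi_civita (br_linear Hbr) (br_linear_l Hbr).
by rewrite !inner_scalar_l inner_scalar; ring.
Qed.

Lemma curv_linear W X : linear (curv br G W X).
Proof.
move=> c Z Z'; rewrite /curv !levi_civita_linear.
by apply/rowP => i; rewrite !mxE; ring.
Qed.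

Lemma inner_ricci_op Y Z : inner G (ricci_op br G Y) Z = ricci_form br G Y Z.
Proof.
rewrite /ricci_op (inner_row_invmx HG) // => c U U'.
rewrite /ricci_form mulr_sumr -big_split /=.
by apply: eq_bigr => i _; rewrite curv_linear !mxE.
Qed.

End LeviCivita.

Section PseudoIwasawa.
Variables (R : realType) (n : nat) (br : 'rV[R]_n -> 'rV[R]_n -> 'rV[R]_n)
  (G g a : 'M[R]_n).
Hypotheses (Hbr : lie_bracket br) (HG : metric_mx G)
  (Hiw : pseudo_iwasawa br G g a).
Local Notation V := 'rV[R]_n.
Local Notation nabla := (levi_civita br G).

Lemma pseudo_iwasawa_decomp (u : V) :
  exists ug ua, [/\ (ug <= g)%MS, (ua <= a)%MS & u = ug + ua].
Proof.
have [[ga1 _] _ _ _ _] := Hiw.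
have : (u <= g + a)%MS by rewrite (eqmxP ga1) submx1.
case/sub_addsmxP => -[ug ua] ->.
by exists (ug *m g), (ua *m a); rewrite !submxMl.
Qed.

Lemma br_sub_g u v : (br u v <= g)%MS.
Proof.
have [_ _ [ideal_g _] [_ abelian_a] _] := Hiw.
have [ug [ua [hug hua ->]]] := pseudo_iwasawa_decomp u.
have [vg [va [hvg hva ->]]] := pseudo_iwasawa_decomp v.
rewrite (brDl Hbr) !(brDr Hbr) (abelian_a ua va hua hva) addr0.
rewrite !addmx_sub ?(ideal_g ug) // (br_anti Hbr ua) eqmx_opp; exact: ideal_g.
Qed.

Lemma inner_a_br X u v : (X <= a)%MS -> inner G X (br u v) = 0.
Proof.
have [_ orth_ga _ _ _] := Hiw.
by move=> hX; rewrite (inner_sym HG) orth_ga ?br_sub_g.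
Qed.

Lemma levi_civita_a_l X Y : (X <= a)%MS -> nabla X Y = 0.
Proof.
have [_ _ _ _ ad_sym] := Hiw.
move=> hX; apply: (inner_nondeg HG) => W.
rewrite (inner_levi_civita Hbr HG) (ad_sym X hX) (inner_sym HG (br Y W)).
rewrite (inner_a_br Y W hX) (br_anti Hbr W) innerNl (inner_sym HG (br X W)).
by rewrite subr0 addrN mulr0.
Qed.

Lemma levi_civita_a_r Y Z : (Z <= a)%MS -> nabla Y Z = br Y Z.
Proof.
have [_ _ _ _ ad_sym] := Hiw.
move=> hZ; apply: (eq_inner HG) => W.
rewrite (inner_levi_civita Hbr HG) (ad_sym Z hZ) (inner_sym HG W).
rewrite (br_anti Hbr Z) innerNl (inner_sym HG (br W Y)) (inner_a_br W Y hZ).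
rewrite opprK addr0.
by rewrite -mulr2n -[inner G _ _ *+ 2]mulr_natl mulKf ?pnatr_eq0.
Qed.

Lemma curv_a W X Z : (X <= a)%MS -> (Z <= a)%MS ->
  curv br G W X Z = - br (br W X) Z.
Proof.
move=> hX hZ; rewrite /curv (levi_civita_a_l Z hX) (levi_civita_a_l _ hX).
rewrite (levi_civita_a_r W (sub0mx _ _)) (br0r Hbr) (levi_civita_a_r _ hZ).
by rewrite subrr sub0r.
Qed.

Lemma ricci_form_a X Z : (X <= a)%MS -> (Z <= a)%MS ->
  ricci_form br G X Z = - killing_form br Z X.
Proof.
move=> hX hZ; rewrite /ricci_form killing_formE -sumrN.
apply: eq_bigr => i _.
rewrite (curv_a _ hX hZ) (br_anti Hbr (br _ X)) (br_anti Hbr _ X).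
by rewrite (brNr Hbr) opprK !mxE.
Qed.

Lemma nilpotent_ideal_sub_g (lambda : R) I :
  (forall Y, ricci_op br G Y = lambda *: Y) -> lambda != 0 ->
  is_ideal br I -> is_nilpotent br I -> (I <= g)%MS.
Proof.
have [_ orth_ga [ideal_g nil_g] _ _] := Hiw.
move=> Hein lambda_neq0 ideal_I nil_I; apply/row_subP => i.
have [xg [xa [hxg hxa xE]]] := pseudo_iwasawa_decomp (row i I).
suff xa0 : xa = 0 by rewrite xE xa0 addr0.
have ric_xa Z : (Z <= a)%MS -> ricci_form br G xa Z = 0.
  move=> hZ; rewrite (ricci_form_a hxa hZ).
  have -> : xa = row i I - xg by rewrite xE addrC addKr.
  rewrite (killing_formBr Hbr).
  rewrite (killing_form_nil_ideal Hbr Z ideal_I nil_I (row_sub i I)).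
  by rewrite (killing_form_nil_ideal Hbr Z ideal_g nil_g hxg) subrr oppr0.
apply: (inner_nondeg HG) => w.
have [wg [wa [hwg hwa ->]]] := pseudo_iwasawa_decomp w.
rewrite innerDr (inner_sym HG xa) orth_ga // add0r.
have : lambda * inner G xa wa = 0.
  by rewrite -innerZl -Hein (inner_ricci_op Hbr HG) ric_xa.
by move/eqP; rewrite mulf_eq0 (negPf lambda_neq0) => /eqP.
Qed.

End PseudoIwasawa.

Theorem corollary3p11 (R : realType) (n : nat)
    (br : 'rV[R]_n -> 'rV[R]_n -> 'rV[R]_n) (G : 'M[R]_n)
    (lambda : R) (g a : 'M[R]_n) :
  lie_bracket br ->
  is_solvable br 1%:M ->
  metric_mx G ->
  (forall Y : 'rV[R]_n, ricci_op br G Y = lambda *: Y) ->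
  lambda != 0 ->
  pseudo_iwasawa br G g a ->
  is_nilradical br g.
Proof.
move=> Hbr _ HG Hein lambda_neq0 Hiw.
have [_ _ [ideal_g nil_g] _ _] := Hiw.
by split=> // I; apply: (nilpotent_ideal_sub_g Hbr HG Hiw Hein lambda_neq0).
Qed.
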